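(* Let $q\ge2$, $\beta>0$, $u>0$, and let $\Phi_0:\mathbb Z_q\to[0,\infty)$ be even with $\Phi_0(0)=0$ and $\Phi_0(i)\ge u$ for all $i\neq0$. Let $Q_0$ be the symmetric $q\times q$ matrix $Q_0(i,j)=e^{-\beta\Phi_0(i-j)}/\sum_{k\in\mathbb Z_q}e^{-\beta\Phi_0(k)}$. Then every eigenvalue $\lambda$ of $Q_0$ satisfies $$\lambda\ \ge\ \frac{1-(q-1)e^{-\beta u}}{1+(q-1)e^{-\beta u}}.$$
   Context: $\mathbb Z_q=\{0,\dots,q-1\}$ with addition mod $q$. $Q_0$ is the normalized transfer matrix of a clock model with pair potential $u_{i,j}=\Phi_0(i-j)$. *)

From HB Require Import structures.
From mathcomp Require Import all_boot all_order all_algebra.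
From mathcomp Require Import all_classical all_reals all_analysis.
Set Implicit Arguments. Unset Strict Implicit. Unset Printing Implicit Defensive.
Import Order.TTheory GRing.Theory Num.Theory.
Local Open Scope ring_scope.

(* Z_q is modelled by 'I_q (values 0..q-1) with arithmetic mod q. *)
Lemma Zq_pos (q : nat) (i : 'I_q) : (0 < q)%N.
Proof. by case: i => m /= /(leq_ltn_trans (leq0n m)). Qed.

Definition Zq_sub (q : nat) (i j : 'I_q) : 'I_q :=
  Ordinal (ltn_pmod (i + (q - j))%N (Zq_pos i)).

Definition Zq_opp (q : nat) (i : 'I_q) : 'I_q :=
  Ordinal (ltn_pmod (q - i)%N (Zq_pos i)).

Definition transferQ0 (R : realType) (q : nat) (beta : R) (Phi0 : 'I_q -> R)
  : 'M[R]_q :=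
  \matrix_(i < q, j < q)
     (expR (- beta * Phi0 (Zq_sub i j)) / \sum_(k < q) expR (- beta * Phi0 k)).

(** Since [Q_0] is circulant with entries [e^{-beta Phi_0(k)} / Z], every column sums to [1] and
    every diagonal entry equals [1/Z]. Gershgorin's theorem applied to the columns places every
    eigenvalue in a disc of centre [1/Z] and radius [1 - 1/Z], so [lambda >= 2/Z - 1]. The gap
    hypothesis bounds the partition function by [Z <= 1 + (q-1) e^{-beta u}], which turns
    [2/Z - 1] into the claimed bound. *)
From HB Require Import structures.
From mathcomp Require Import all_boot all_order all_algebra.
From mathcomp Require Import all_classical all_reals all_analysis.
From mathcomp Require Import ring lra.
Set Implicit Arguments. Unset Strict Implicit. Unset Printing Implicit Defensive.
Import Order.TTheory GRing.Theory Num.Theory.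
Local Open Scope ring_scope.

Section Gershgorin.
Variables (R : realFieldType) (n : nat) (A : 'M[R]_n).

(* [eigenvalue] refers to left eigenvectors [v *m A = lambda *: v], hence columns. *)
Lemma eigenvalue_gershgorin_col lambda : eigenvalue A lambda ->
  exists j, `|lambda - A j j| <= \sum_(i | i != j) `|A i j|.
Proof.
move=> /eigenvalueP [v vA v_neq0].
have [i0 vi0] : exists i, v 0 i != 0.
  apply/existsP; apply: contraNT v_neq0; rewrite negb_exists => /forallP v0.
  by apply/eqP/rowP => i; rewrite mxE; apply/eqP/negbNE/v0.
have [j _ j_max] := arg_maxP (fun i => `|v 0 i|) (isT : predT i0).
have vj_gt0 : 0 < `|v 0 j| by apply: lt_le_trans (j_max i0 isT); rewrite normr_gt0.
exists j; rewrite -(ler_pM2r vj_gt0) -normrM mulr_suml.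
have -> : (lambda - A j j) * v 0 j = \sum_(i | i != j) v 0 i * A i j.
  move/rowP: vA => /(_ j); rewrite !mxE (bigD1 j) //= => vAj.
  by rewrite mulrBl -vAj [v 0 j * _]mulrC addrAC subrr add0r.
apply: (le_trans (ler_norm_sum _ _ _)); apply: ler_sum => i _.
rewrite normrM mulrC; apply: ler_wpM2l => //; exact: j_max.
Qed.

Lemma eigenvalue_ge_diag_colsum lambda d s :
  (forall i j, 0 <= A i j) -> (forall j, A j j = d) -> (forall j, \sum_i A i j = s) ->
  eigenvalue A lambda -> 2 * d - s <= lambda.
Proof.
move=> A_ge0 A_diag A_colsum /eigenvalue_gershgorin_col [j].
have -> : \sum_(i | i != j) `|A i j| = s - d.
  under eq_bigr => i _ do rewrite ger0_norm //.
  by rewrite -(A_colsum j) [in RHS](bigD1 j) //= A_diag addrAC subrr add0r.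
rewrite A_diag ler_norml => /andP [lb _]; lra.
Qed.

End Gershgorin.

Lemma Zq_sub_inj (q : nat) (j : 'I_q) : injective (fun i => Zq_sub i j).
Proof.
move=> i i' /(congr1 val) /= /eqP; rewrite eqn_modDr !modn_small //.
by move=> /eqP /val_inj.
Qed.

Lemma Zq_sub_diag (q : nat) (j : 'I_q) : nat_of_ord (Zq_sub j j) = 0%N.
Proof. by rewrite /= subnKC ?modnn // ltnW. Qed.

Lemma sum_Zq_sub (R : nmodType) (q : nat) (f : 'I_q -> R) (j : 'I_q) :
  \sum_i f (Zq_sub i j) = \sum_k f k.
Proof. by rewrite [RHS](reindex_inj (@Zq_sub_inj _ j)). Qed.

Lemma ler_sum_bigD1_const (R : numDomainType) (T : finType) (f : T -> R) (k0 : T) (c : R) :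
  (forall k, k != k0 -> f k <= c) -> \sum_k f k <= f k0 + (#|T|%:R - 1) * c.
Proof.
move=> f_le; rewrite (bigD1 k0) //= lerD2l.
apply: le_trans (ler_sum _ f_le) _.
by rewrite sumr_const cardC1 (cardD1 k0) inE add1n /= -natr1 addrK mulr_natl.
Qed.

Lemma ratio_le_two_div_sub1 (R : realFieldType) (s Z : R) :
  0 < Z -> Z <= 1 + s -> (1 - s) / (1 + s) <= 2 / Z - 1.
Proof.
move=> Z_gt0 Z_le; have s1_gt0 : 0 < 1 + s by apply: lt_le_trans Z_le.
have -> : (1 - s) / (1 + s) = 2 / (1 + s) - 1.
  by field; rewrite lt0r_neq0.
by rewrite lerD2r ler_pM2l // lef_pV2 ?posrE.
Qed.

Theorem lemma4p5 (R : realType) (q : nat) (beta u : R) (Phi0 : 'I_q -> R)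
  (hq : (2 <= q)%N) (hbeta : 0 < beta) (hu : 0 < u)
  (hnn : forall i, 0 <= Phi0 i)
  (heven : forall i, Phi0 (Zq_opp i) = Phi0 i)
  (hzero : forall i : 'I_q, nat_of_ord i = 0%N -> Phi0 i = 0)
  (hgap : forall i : 'I_q, nat_of_ord i <> 0%N -> u <= Phi0 i)
  (lambda : R) :
  eigenvalue (transferQ0 beta Phi0) lambda ->
  (1 - (q%:R - 1) * expR (- beta * u)) / (1 + (q%:R - 1) * expR (- beta * u))
    <= lambda.
Proof.
move=> eig; set e := fun k => expR (- beta * Phi0 k); set Z := \sum_k e k.
have e0 (k : 'I_q) : nat_of_ord k = 0%N -> e k = 1.
  by move=> /hzero k0; rewrite /e k0 mulr0 expR0.
pose k0 : 'I_q := Ordinal (leq_trans (isT : 0 < 2)%N hq).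
have Z_gt0 : 0 < Z.
  by rewrite /Z (bigD1 k0) //= e0 // ltr_wpDr // sumr_ge0 // => k _; exact: expR_ge0.
have Z_le : Z <= 1 + (q%:R - 1) * expR (- beta * u).
  have := @ler_sum_bigD1_const _ _ e k0 (expR (- beta * u)).
  rewrite card_ord e0 //; apply=> k k_neq0; rewrite ler_expR ler_nM2l ?oppr_lt0 //.
  by apply: hgap => k_eq0; move/eqP: k_neq0; apply; apply: val_inj.
apply: le_trans (ratio_le_two_div_sub1 Z_gt0 Z_le) _.
have Q_E i j : transferQ0 beta Phi0 i j = e (Zq_sub i j) / Z by rewrite mxE.
have -> : 2 / Z = 2 * (1 / Z) by rewrite mul1r.
apply: (eigenvalue_ge_diag_colsum _ _ _ eig) => [i j|j|j]; rewrite ?Q_E.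
- by rewrite divr_ge0 ?expR_ge0 // ltW.
- by rewrite e0 ?Zq_sub_diag.
- under eq_bigr => i _ do rewrite Q_E.
  by rewrite -mulr_suml sum_Zq_sub -/Z divff ?lt0r_neq0.
Qed.
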